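(* Let $G$ be a $(P_6,C_5)$-free graph. If $G$ admits a nice coloring, then $G$ is 4-colorable.
   Context: Graphs are finite and simple. A graph is $(P_6,C_5)$-free if it has no induced 6-vertex path and no induced 5-cycle. A partial 4-coloring of $G$ assigns colors from $\{1,2,3,4\}$ to some of the vertices so that adjacent colored vertices get different colors; the other vertices are uncolored. A partial 4-coloring $c$ is nice if (N1) the set of uncolored vertices is an independent set, and (N2) for every uncolored vertex $y$, letting $U=\{u\in N(y): c(u)\in\{1,2\}\}$ and $W=\{w\in N(y): c(w)\in\{3,4\}\}$, we have $N(y)=U\cup W$ and at least one of $U,W$ is an independent set (possibly empty). *)

From mathcomp Require Import all_boot.
Set Implicit Arguments. Unset Strict Implicit. Unset Printing Implicit Defensive.

Definition simple_graph (T : finType) (e : rel T) : Prop :=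
  symmetric e /\ irreflexive e.

Definition has_induced_P6 (T : finType) (e : rel T) : Prop :=
  exists v : 'I_6 -> T, injective v /\
    forall i j : 'I_6, e (v i) (v j) = ((i.+1 == j :> nat) || (j.+1 == i :> nat)).

Definition has_induced_C5 (T : finType) (e : rel T) : Prop :=
  exists v : 'I_5 -> T, injective v /\
    forall i j : 'I_5, e (v i) (v j) =
      ((i.+1 %% 5 == j :> nat) || (j.+1 %% 5 == i :> nat)).

Definition P6_C5_free (T : finType) (e : rel T) : Prop :=
  ~ has_induced_P6 e /\ ~ has_induced_C5 e.

(* Partial 4-coloring: c x = None means x uncolored; c x = Some k means colour k+1
   (so ordinals 0,1 are the paper's colours 1,2 and ordinals 2,3 are colours 3,4). *)
Definition partial_4coloring (T : finType) (e : rel T) (c : T -> option 'I_4) : Prop :=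
  forall x y, e x y -> c x <> None -> c y <> None -> c x <> c y.

Definition independent (T : finType) (e : rel T) (S : pred T) : Prop :=
  forall x y, S x -> S y -> ~~ e x y.

Definition col12 (c : option 'I_4) : bool :=
  if c is Some k then (k < 2)%N else false.
Definition col34 (c : option 'I_4) : bool :=
  if c is Some k then (2 <= k)%N else false.

Definition nice_coloring (T : finType) (e : rel T) (c : T -> option 'I_4) : Prop :=
  partial_4coloring e c /\
  independent e (fun x => c x == None) /\
  (forall y, c y = None ->
     let U := fun u => e y u && col12 (c u) in
     let W := fun w => e y w && col34 (c w) in
     (forall u, e y u -> U u || W u) /\
     (independent e U \/ independent e W)).

Definition four_colorable (T : finType) (e : rel T) : Prop :=
  exists f : T -> 'I_4, forall x y, e x y -> f x != f y.

From mathcomp Require Import all_boot zify.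
Set Implicit Arguments. Unset Strict Implicit. Unset Printing Implicit Defensive.

(* Induction on the number of uncoloured vertices.  Let y be uncoloured; after
   exchanging the colour pairs {1,2} and {3,4} we may assume that the set U of
   neighbours of y coloured 1 or 2 is independent.  Swap colours 1 and 2 on
   every {1,2}-Kempe chain through a neighbour of y coloured 2; then colour 2
   becomes free at y, unless some chain joins two neighbours of y of different
   colours.  A shortest such chain is induced and its interior avoids N(y), so
   with y it forms an induced cycle: odd since the colours alternate, not a
   triangle since U is independent, hence a C5 or long enough to contain an
   induced P6. *)

Definition ord_one : 'I_4 := Ordinal (isT : 1 < 4).

Definition swap12 (k : 'I_4) : 'I_4 :=
  if k == ord0 then ord_one else if k == ord_one then ord0 else k.

Definition swap_pairs (k : 'I_4) : 'I_4 := Ordinal (ltn_pmod (k + 2) (isT : 0 < 4)).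

Lemma swap12K : involutive swap12.
Proof. by case=> [[|[|[|[|?]]]] ?]; apply: val_inj. Qed.

Lemma swap_pairsK : involutive swap_pairs.
Proof. by case=> [[|[|[|[|?]]]] ?]; apply: val_inj. Qed.

Lemma col12_swap12 o : col12 (omap swap12 o) = col12 o.
Proof. by case: o => [[[|[|[|[|?]]]] ?]|]. Qed.

Lemma col34_swap12 o : col34 (omap swap12 o) = col34 o.
Proof. by case: o => [[[|[|[|[|?]]]] ?]|]. Qed.

Lemma col12_swap_pairs o : col12 (omap swap_pairs o) = col34 o.
Proof. by case: o => [[[|[|[|[|?]]]] ?]|]. Qed.

Lemma col34_swap_pairs o : col34 (omap swap_pairs o) = col12 o.
Proof. by case: o => [[[|[|[|[|?]]]] ?]|]. Qed.

Lemma eqNone_col o : (o == None) = ~~ col12 o && ~~ col34 o.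
Proof. by case: o => [[[|[|[|[|?]]]] ?]|]. Qed.

Lemma col12_Some o : col12 o -> o <> None.
Proof. by case: o. Qed.

Lemma col12P o : col12 o -> o = Some ord0 \/ o = Some ord_one.
Proof.
by case: o => [[[|[|?]] ?]|] // _; [left | right]; congr Some; apply: val_inj.
Qed.

Lemma col12_alternate a b d :
  col12 a -> col12 b -> col12 d -> a <> b -> b <> d -> a = d.
Proof. by move=> /col12P[]-> /col12P[]-> /col12P[]->. Qed.

Section InducedSubgraphs.

Variables (T : finType) (e : rel T).
Hypotheses (e_sym : symmetric e) (e_irr : irreflexive e).

Definition separating (n : nat) (pat : rel nat) : bool :=
  all (fun i => all (fun j =>
    [|| i == j, pat i j | has (fun k => pat i k != pat j k) (iota 0 n)])
  (iota 0 n)) (iota 0 n).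

(* As [e] is irreflexive, [v i = v j] forces [~~ pat i j] and equal rows of
   [pat] at [i] and [j]. *)
Lemma separating_injective n (pat : rel nat) (v : 'I_n -> T) :
  (forall i j : 'I_n, e (v i) (v j) = pat i j) -> separating n pat -> injective v.
Proof.
move=> adj /allP sep i j vij; apply: val_inj.
have := allP (sep i _) j; rewrite !mem_iota !ltn_ord => /(_ isT isT).
rewrite -adj vij e_irr /= => /orP[/eqP // | /hasP[k]].
rewrite mem_iota /= => lt_kn.
by rewrite -[k]/(val (Ordinal lt_kn)) -!adj vij eqxx.
Qed.

Lemma induced_path_adj (t : nat -> T) n :
  (forall i, i.+1 < n -> e (t i) (t i.+1)) ->
  (forall i j, i.+1 < j < n -> ~~ e (t i) (t j)) ->
  forall i j, i < n -> j < n -> e (t i) (t j) = (i.+1 == j) || (j.+1 == i).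
Proof.
move=> edge chord i j lt_in lt_jn.
wlog le_ij : i j lt_in lt_jn / i <= j.
  move=> W; case: (leqP i j) => [|/ltnW] le; first exact: W.
  by rewrite e_sym orbC W.
case: (ltngtP i.+1 j) => [lt_ij | gt_ij | eq_ij].
- rewrite (negbTE (chord i j _)); [lia | exact/andP].
- have -> : j = i by lia.
  by rewrite e_irr; lia.
- by rewrite -eq_ij edge ?eqxx // eq_ij.
Qed.

Lemma induced_cycle_adj (t : nat -> T) n : 2 < n ->
  (forall i, i.+1 < n -> e (t i) (t i.+1)) -> e (t n.-1) (t 0) ->
  (forall i j, i.+1 < j < n -> (0 < i) || (j < n.-1) -> ~~ e (t i) (t j)) ->
  forall i j, i < n -> j < n -> e (t i) (t j) = (i.+1 %% n == j) || (j.+1 %% n == i).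
Proof.
move=> n_gt2 edge wrap chord i j lt_in lt_jn.
wlog le_ij : i j lt_in lt_jn / i <= j.
  move=> W; case: (leqP i j) => [|/ltnW] le; first exact: W.
  by rewrite e_sym orbC W.
case: (ltnP j.+1 n) => [lt_j1n | le_nj1].
  rewrite !modn_small; try lia.
  apply: (@induced_path_adj t n.-1); try lia.
  - by move=> k lt_k; apply: edge; lia.
  - by move=> k l /andP[lt_kl lt_l]; apply: chord; [lia | rewrite lt_l orbT].
have -> : j = n.-1 by lia.
rewrite prednK ?modnn; last lia.
case: (ltnP i.+1 n) => [lt_i1n | le_ni1].
- rewrite modn_small //.
  case: (ltngtP i.+1 n.-1) => [lt_i1 | ? | <-]; last by rewrite edge ?eqxx; lia.
  + case: (posnP i) => [-> | i_pos]; first by rewrite e_sym wrap; lia.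
    by rewrite (negbTE (chord i n.-1 _ _)) ?i_pos; lia.
  + lia.
- have -> : i = n.-1 by lia.
  by rewrite e_irr prednK ?modnn; lia.
Qed.

Lemma induced_P6 (t : nat -> T) :
  (forall i, i.+1 < 6 -> e (t i) (t i.+1)) ->
  (forall i j, i.+1 < j < 6 -> ~~ e (t i) (t j)) ->
  has_induced_P6 e.
Proof.
move=> edge chord.
pose pat := [rel i j : nat | (i.+1 == j) || (j.+1 == i)].
have adj (i j : 'I_6) : e (t i) (t j) = pat i j.
  exact: induced_path_adj edge chord _ _ (ltn_ord i) (ltn_ord j).
by exists (fun i => t i); split=> //; apply: (@separating_injective 6 pat _ adj).
Qed.

Lemma induced_C5 (t : nat -> T) :
  (forall i, i.+1 < 5 -> e (t i) (t i.+1)) -> e (t 4) (t 0) ->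
  (forall i j, i.+1 < j < 5 -> (0 < i) || (j < 4) -> ~~ e (t i) (t j)) ->
  has_induced_C5 e.
Proof.
move=> edge wrap chord.
pose pat := [rel i j : nat | (i.+1 %% 5 == j) || (j.+1 %% 5 == i)].
have adj (i j : 'I_5) : e (t i) (t j) = pat i j.
  exact: induced_cycle_adj edge wrap chord _ _ (ltn_ord i) (ltn_ord j).
by exists (fun i => t i); split=> //; apply: (@separating_injective 5 pat _ adj).
Qed.

End InducedSubgraphs.

Section Walks.

Variables (T : Type) (r : rel T).

Definition walk (k : nat) (s : nat -> T) : Prop := forall i, i < k -> r (s i) (s i.+1).

Lemma walk_prefix k s i : walk k s -> i <= k -> walk i s.
Proof. by move=> w le_ik m lt_mi; apply: w; apply: leq_trans le_ik. Qed.

Lemma walk_suffix k s i : walk k s -> walk (k - i) (fun m => s (i + m)).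
Proof. by move=> w m lt_m; rewrite addnS; apply: w; lia. Qed.

Lemma walk_shortcut k s i j : walk k s -> i < j <= k -> r (s i) (s j) ->
  walk (k - (j - i.+1)) (fun m => if m <= i then s m else s (m + (j - i.+1))).
Proof.
move=> w /andP[lt_ij le_jk] r_ij m lt_m /=.
case: (ltngtP m i) => [lt_mi | lt_im | ->].
- by apply: w; lia.
- by rewrite addSn; apply: w; lia.
- by rewrite subnKC.
Qed.

End Walks.

Lemma connect_walk (T : finType) (r : rel T) u v :
  connect r u v -> exists k s, [/\ s 0 = u, s k = v & walk r k s].
Proof.
move=> /connectP[p r_p ->]; exists (size p), (nth u (u :: p)); split=> //.
- by rewrite -[size p]/((size (u :: p)).-1) nth_last.
- by move=> i lt_i; apply: (pathP u r_p).
Qed.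

Section KempeChains.

Variables (T : finType) (e : rel T) (c : T -> option 'I_4).

Definition kempe12 : rel T := [rel a b | [&& e a b, col12 (c a) & col12 (c b)]].

Lemma kempe_walk_col12 k s i : walk kempe12 k s -> 0 < k -> i <= k -> col12 (c (s i)).
Proof.
move=> w k_pos; rewrite leq_eqVlt => /orP[/eqP -> | lt_ik].
- have lt_k1k : k.-1 < k by rewrite ltn_predL.
  by case/and3P: (w _ lt_k1k); rewrite prednK.
- by case/and3P: (w i lt_ik).
Qed.

Lemma kempe_walk_even k s m :
  partial_4coloring e c -> walk kempe12 k s -> m.*2 <= k -> c (s m.*2) = c (s 0).
Proof.
move=> c_partial w; elim: m => [//|m IH] le_mk.
have step i : i < k -> c (s i) <> c (s i.+1).
  move=> lt_ik; case/and3P: (w i lt_ik) => e_i col_i col_i1.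
  exact: c_partial e_i (col12_Some col_i) (col12_Some col_i1).
rewrite doubleS in le_mk *; rewrite -IH; last lia.
symmetry; apply: col12_alternate (step _ _) (step _ _);
  try apply: kempe_walk_col12 w _ _; lia.
Qed.

Variable y : T.

Definition kempe_link (k : nat) (s : nat -> T) : Prop :=
  [/\ walk kempe12 k s, e y (s 0), e y (s k) & c (s 0) <> c (s k)].

Lemma kempe_link_shortcut k s i j :
  kempe_link k s -> i.+1 < j <= k -> e (s i) (s j) ->
  exists k' s', k' < k /\ kempe_link k' s'.
Proof.
move=> [w y_s0 y_sk c_0k] /andP[lt_ij le_jk] e_ij.
have k_pos : 0 < k by lia.
have kempe_ij : kempe12 (s i) (s j).
  by rewrite /kempe12 /= e_ij !(kempe_walk_col12 w) //; lia.
exists (k - (j - i.+1)), (fun m => if m <= i then s m else s (m + (j - i.+1))).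
split; first lia.
have end_k : (k - (j - i.+1) <= i) = false by lia.
split; rewrite /= ?end_k ?subnK //; try lia.
by apply: walk_shortcut => //; lia.
Qed.

Lemma kempe_link_interior k s i :
  kempe_link k s -> 0 < i < k -> e y (s i) ->
  exists k' s', k' < k /\ kempe_link k' s'.
Proof.
move=> [w y_s0 y_sk c_0k] /andP[i_pos lt_ik] y_si.
case: (eqVneq (c (s i)) (c (s 0))) => [c_i0 | c_i0].
- exists (k - i), (fun m => s (i + m)); split; first lia.
  by split; rewrite /= ?addn0 ?subnKC ?c_i0 ?(ltnW lt_ik) //; apply: walk_suffix.
- exists i, s; split=> //; split=> //; first exact: walk_prefix w (ltnW lt_ik).
  by move=> c_0i; rewrite c_0i eqxx in c_i0.
Qed.

Section ShortestLink.

Hypotheses (e_sym : symmetric e) (e_irr : irreflexive e) (free : P6_C5_free e).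
Hypotheses (c_partial : partial_4coloring e c)
  (U_indep : independent e (fun u => e y u && col12 (c u))).

(* Together with y, such a link closes an induced cycle of length k + 2. *)
Lemma induced_kempe_link_false k s :
  kempe_link k s ->
  (forall i j, i.+1 < j <= k -> ~~ e (s i) (s j)) ->
  (forall i, 0 < i < k -> ~~ e y (s i)) -> False.
Proof.
move=> [w y_s0 y_sk c_0k] chordless interior.
have k_odd : odd k.
  apply/contraT => k_even; exfalso; apply: c_0k.
  by rewrite -(even_halfK k_even) (kempe_walk_even c_partial w) // even_halfK.
pose t i := if i is i'.+1 then s i' else y.
have t_edge i : i < k.+1 -> e (t i) (t i.+1).
  by case: i => [|i] lt_ik //=; case/and3P: (w i lt_ik).
have t_chord i j :
    i.+1 < j <= k.+1 -> (0 < i) || (j <= k) -> ~~ e (t i) (t j).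
  case: i => [|i]; case: j => [|j] //= lt_ij lt_j.
  - by apply: interior; lia.
  - by apply: chordless; lia.
case: free => noP6 noC5.
move: k_odd w y_sk c_0k chordless interior t_edge t_chord.
case: k => [|[|[|[|[|k]]]]] //= _ w y_sk _ _ _ t_edge t_chord.
- have := U_indep (x := s 0) (y := s 1); rewrite y_s0 y_sk.
  by case/and3P: (w 0 isT) => e01 -> -> /(_ isT isT); rewrite e01.
- apply: noC5; apply: (@induced_C5 _ _ e_sym e_irr t).
  + by move=> i lt_i; apply: t_edge; lia.
  + by rewrite /= e_sym.
  + by move=> i j lt_ij /orP[i_pos | lt_j]; apply: t_chord; lia.
- apply: noP6; apply: (@induced_P6 _ _ e_sym e_irr t).
  + by move=> i lt_i; apply: t_edge; lia.
  + by move=> i j lt_ij; apply: t_chord; lia.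
Qed.

Lemma no_kempe_link k s : ~ kempe_link k s.
Proof.
elim/ltn_ind: k s => k IH s link.
have shorter (P : Prop) : (exists k' s', k' < k /\ kempe_link k' s') -> P.
  by case=> [k' [s' [lt_k' link']]]; case: (IH k' lt_k' s').
apply: (induced_kempe_link_false link).
- move=> i j lt_ij; apply/negP => e_ij.
  exact: shorter (kempe_link_shortcut link lt_ij e_ij).
- move=> i lt_i; apply/negP => y_si.
  exact: shorter (kempe_link_interior link lt_i y_si).
Qed.

Lemma kempe12_neighbors_disconnected u v :
  e y u -> e y v -> c u <> c v -> ~ connect kempe12 u v.
Proof.
move=> y_u y_v c_uv /connect_walk[k [s [s0 sk w]]].
by apply: (@no_kempe_link k s); split; rewrite ?s0 ?sk.
Qed.

End ShortestLink.

End KempeChains.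

Section NiceColorings.

Variables (T : finType) (e : rel T).
Hypotheses (e_sym : symmetric e) (e_irr : irreflexive e).

Definition uncolored (c : T -> option 'I_4) := [pred x | c x == None].

Lemma independentS (P Q : pred T) :
  (forall x, Q x -> P x) -> independent e P -> independent e Q.
Proof. by move=> QP indP x z /QP Px /QP Pz; apply: indP. Qed.

Lemma nice_coloring_same_classes (c c' : T -> option 'I_4) :
  nice_coloring e c -> partial_4coloring e c' ->
  (forall x, col12 (c' x) = col12 (c x)) -> (forall x, col34 (c' x) = col34 (c x)) ->
  nice_coloring e c'.
Proof.
move=> [_ [N1 N2]] c'_partial c12 c34.
have unc x : (c' x == None) = (c x == None) by rewrite !eqNone_col c12 c34.
split=> //; split; first by apply: independentS N1 => x; rewrite /= unc.
move=> y /eqP; rewrite unc => /eqP /N2[cover indep] /=; split.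
  by move=> u /cover; rewrite c12 c34.
by case: indep => indep; [left | right]; apply: independentS indep => u;
  rewrite /= ?c12 ?c34.
Qed.

Lemma nice_coloring_swap_pairs (c : T -> option 'I_4) :
  nice_coloring e c -> nice_coloring e (fun x => omap swap_pairs (c x)).
Proof.
move=> [c_partial [N1 N2]].
have unc o : (omap swap_pairs o == None) = (o == None) by case: o.
have colored o : omap swap_pairs o <> None -> o <> None by case: o.
split; [|split].
- move=> x z e_xz /colored cx /colored cz /(inj_omap (inv_inj swap_pairsK)).
  exact: c_partial.
- by apply: independentS N1 => x; rewrite /= unc.
move=> y /eqP; rewrite unc => /eqP /N2[cover indep] /=; split.
  by move=> u /cover; rewrite col12_swap_pairs col34_swap_pairs orbC.
by case: indep => indep; [right | left]; apply: independentS indep => u;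
  rewrite /= ?col12_swap_pairs ?col34_swap_pairs.
Qed.

Definition set_color (c : T -> option 'I_4) (y : T) (k : 'I_4) (x : T) : option 'I_4 :=
  if x == y then Some k else c x.

Lemma nice_coloring_set_color c y k :
  nice_coloring e c -> c y = None -> (forall z, e y z -> c z <> Some k) ->
  nice_coloring e (set_color c y k).
Proof.
move=> [c_partial [N1 N2]] cy k_free.
have y_isolated x : c x = None -> ~~ e x y by move=> cx; apply: N1; rewrite /= ?cx ?cy.
split; [|split].
- move=> x z e_xz; rewrite /set_color.
  case: (eqVneq x y) => [exy | ne_xy]; case: (eqVneq z y) => [ezy | ne_zy].
  + by rewrite exy ezy e_irr in e_xz.
  + by move=> _ cz; apply/nesym/k_free; rewrite -exy.
  + by move=> cx _; apply: k_free; rewrite -ezy e_sym.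
  + exact: c_partial.
- apply: independentS N1 => x; rewrite /set_color.
  by case: (x == y).
move=> w; rewrite /set_color; case: (eqVneq w y) => // ne_wy cw.
have ne_uy u : e w u -> (u == y) = false.
  by move=> e_wu; apply/negbTE/eqP => euy; move: (y_isolated w cw); rewrite -euy e_wu.
have [cover indep] := N2 w cw; split=> /=.
  by move=> u e_wu; rewrite ne_uy //; apply: cover.
by case: indep => indep; [left | right]; apply: independentS indep => u /andP[e_wu];
  rewrite ne_uy // e_wu.
Qed.

Lemma card_uncolored_set_color c y k :
  c y = None -> #|uncolored (set_color c y k)| < #|uncolored c|.
Proof.
move=> cy; apply: proper_card; apply/properP; split.
  by apply/subsetP => x; rewrite !inE /set_color; case: (x == y).
by exists y; rewrite !inE /set_color ?eqxx ?cy.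
Qed.

Definition kempe_swap (c : T -> option 'I_4) (S : pred T) (x : T) : option 'I_4 :=
  if S x then omap swap12 (c x) else c x.

Lemma col12_kempe_swap c S x : col12 (kempe_swap c S x) = col12 (c x).
Proof. by rewrite /kempe_swap; case: (S x); rewrite ?col12_swap12. Qed.

Lemma col34_kempe_swap c S x : col34 (kempe_swap c S x) = col34 (c x).
Proof. by rewrite /kempe_swap; case: (S x); rewrite ?col34_swap12. Qed.

Lemma kempe_swap_partial c (S : pred T) :
  partial_4coloring e c -> (forall x, S x -> col12 (c x)) ->
  (forall x z, S x -> e x z -> col12 (c z) -> S z) ->
  partial_4coloring e (kempe_swap c S).
Proof.
move=> c_partial S_col12 S_closed.
have colored o : omap swap12 o <> None -> o <> None by case: o.
have mixed x z : S x -> ~~ S z -> e x z -> omap swap12 (c x) <> c z.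
  move=> Sx /negP Sz e_xz eq_xz; apply: Sz; apply: (S_closed x z Sx e_xz).
  by rewrite -eq_xz col12_swap12 (S_col12 x Sx).
move=> x z e_xz; rewrite /kempe_swap.
case: (boolP (S x)) => Sx; case: (boolP (S z)) => Sz.
- move=> /colored cx /colored cz /(inj_omap (inv_inj swap12K)).
  exact: c_partial.
- by move=> _ _; apply: mixed Sx Sz e_xz.
- by move=> _ _; apply/nesym/(mixed z x Sz Sx); rewrite e_sym.
- exact: c_partial.
Qed.

End NiceColorings.

Section Extension.

Variables (T : finType) (e : rel T).
Hypotheses (e_simple : simple_graph e) (free : P6_C5_free e).

Lemma nice_coloring_extend12 c y :
  nice_coloring e c -> c y = None ->
  independent e (fun u => e y u && col12 (c u)) ->
  exists c', nice_coloring e c' /\ #|uncolored c'| < #|uncolored c|.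
Proof.
move=> c_nice cy U_indep; have [e_sym e_irr] := e_simple.
have [c_partial [_ N2]] := c_nice.
pose S x := col12 (c x) &&
  [exists u, [&& e y u, c u == Some ord_one & connect (kempe12 e c) u x]].
have S_closed x z : S x -> e x z -> col12 (c z) -> S z.
  move=> /andP[cx /existsP[u /and3P[y_u cu conn]]] e_xz cz.
  rewrite /S cz; apply/existsP; exists u; rewrite y_u cu.
  by apply: connect_trans conn (connect1 _); rewrite /kempe12 /= e_xz cx cz.
pose c' := kempe_swap c S.
have c'_nice : nice_coloring e c'.
  apply: nice_coloring_same_classes c_nice _
    (col12_kempe_swap _ _) (col34_kempe_swap _ _).
  by apply: kempe_swap_partial => // x /andP[].
have c'y : c' y = None by rewrite /c' /kempe_swap /S cy.
have one_free z : e y z -> c' z <> Some ord_one.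
  move=> y_z; have [cover _] := N2 y cy.
  case/orP: (cover z y_z) => /andP[_ cz]; last first.
    by move=> c'z; move: cz; rewrite -(col34_kempe_swap c S) -/c' c'z.
  case: (col12P cz) => cz'.
  - have notS : ~~ S z.
      apply/negP => /andP[_ /existsP[u /and3P[y_u /eqP cu conn]]].
      by apply: (kempe12_neighbors_disconnected e_sym e_irr free c_partial U_indep
                   y_u y_z _ conn); rewrite cu cz'.
    by rewrite /c' /kempe_swap (negbTE notS) cz'.
  - have Sz : S z.
      by rewrite /S cz; apply/existsP; exists z; rewrite y_z cz' eqxx connect0.
    by rewrite /c' /kempe_swap Sz cz'; move/eqP.
exists (set_color c' y ord_one); split; first exact: nice_coloring_set_color.
have -> : #|uncolored c| = #|uncolored c'|.
  by apply: eq_card => x; rewrite !inE !eqNone_col col12_kempe_swap col34_kempe_swap.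
exact: card_uncolored_set_color.
Qed.

Lemma nice_coloring_extend c y :
  nice_coloring e c -> c y = None ->
  exists c', nice_coloring e c' /\ #|uncolored c'| < #|uncolored c|.
Proof.
move=> c_nice cy; have [_ [_ N2]] := c_nice.
have [_ [U_indep | W_indep]] := N2 y cy.
  exact: nice_coloring_extend12 c_nice cy U_indep.
have swap_y : omap swap_pairs (c y) = None by rewrite cy.
have swap_U : independent e (fun u => e y u && col12 (omap swap_pairs (c u))).
  by apply: independentS W_indep => u; rewrite /= col12_swap_pairs.
have [c' [c'_nice lt_c']] :=
  nice_coloring_extend12 (nice_coloring_swap_pairs c_nice) swap_y swap_U.
exists c'; split=> //; apply: leq_trans lt_c' _; apply: eq_leq.
by apply: eq_card => x; rewrite !inE; case: (c x).
Qed.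

End Extension.

Lemma four_colorable_of_colored (T : finType) (e : rel T) c :
  partial_4coloring e c -> (forall x, c x <> None) -> four_colorable e.
Proof.
move=> c_partial colored; exists (fun x => odflt ord0 (c x)) => x z e_xz.
have := c_partial x z e_xz (colored x) (colored z).
by case: (c x) (colored x) => [a|//] _; case: (c z) (colored z) => [b|//] _ /eqP.
Qed.

Theorem lemma4 (T : finType) (e : rel T) :
  simple_graph e -> P6_C5_free e ->
  (exists c : T -> option 'I_4, nice_coloring e c) ->
  four_colorable e.
Proof.
move=> e_simple free [c c_nice].
move: {2}#|uncolored c| (leqnn #|uncolored c|) => n.
elim/ltn_ind: n c c_nice => n IH c c_nice le_n.
have [y /eqP cy | colored] := pickP (uncolored c).
- have [c' [c'_nice lt_c']] := nice_coloring_extend e_simple free c_nice cy.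
  exact: IH (leq_trans lt_c' le_n) c' c'_nice (leqnn _).
- apply: (four_colorable_of_colored c_nice.1) => x cx.
  by move: (colored x); rewrite /= cx eqxx.
Qed.
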